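(* For every sequent $\Gamma$ and every formula $A$ of MRL, the sequent $\Gamma, \mathcal{R}{:}A$ (where $\mathcal{R}$ is the full set of roles) is derivable in MRL.
   Context: Fix a nonempty set $\mathcal{R}$ (the set of roles). For $R\subseteq\mathcal{R}$ write $\overline{R}=\mathcal{R}\setminus R$. An ultrafilter $\mathcal{U}$ on $\mathcal{R}$ is a set of subsets of $\mathcal{R}$ such that $\mathcal{R}\in\mathcal{U}$; $R_1\in\mathcal{U}$ and $R_1\subseteq R_2$ imply $R_2\in\mathcal{U}$; $R_1,R_2\in\mathcal{U}$ imply $R_1\cap R_2\in\mathcal{U}$; and for every $R\subseteq\mathcal{R}$, $R\in\mathcal{U}$ or $\overline{R}\in\mathcal{U}$. An endomorphism is any function $f:\mathcal{R}\to\mathcal{R}$, and $f^{-1}(R)$ denotes the preimage of $R$. Fix a first-order language of terms $t$ with variables $x$, and a collection of primitive (atomic) formulas $a$ (which may contain terms). Formulas of MRL: $A ::= a \mid \neg_f(A) \mid A_1\wedge_{\mathcal{U}} A_2 \mid A\supset_{f,\mathcal{U}} B \mid \forall_{\mathcal{U}}(\lambda x.A)$, with $f$ an endomorphism and $\mathcal{U}$ an ultrafilter on $\mathcal{R}$; $x$ is bound in $\forall_{\mathcal{U}}(\lambda x.A)$, and $A[t/x]$ is capture-avoiding substitution. An i-formula is a pair $R{:}A$ with $R\subseteq\mathcal{R}$ and $A$ a formula; a sequent is a finite multiset of i-formulas, and comma denotes multiset union. Derivability in MRL is given by the rules (premises $\Rightarrow$ conclusion, $\Gamma,\Gamma_1,\Gamma_2$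 arbitrary sequents): (Id) $\Gamma, R_1{:}a,\ldots,R_n{:}a$ is derivable whenever $n\ge1$ and $R_1,\ldots,R_n$ are pairwise disjoint with union $\mathcal{R}$; (Weaken) $\Gamma,R{:}A,R{:}A \Rightarrow \Gamma,R{:}A$; ($\neg$) $\Gamma, f^{-1}(R){:}A \Rightarrow \Gamma, R{:}\neg_f(A)$; ($\wedge$-neg-l) if $R\notin\mathcal{U}$: $\Gamma,R{:}A\Rightarrow\Gamma,R{:}A\wedge_{\mathcal{U}}B$; ($\wedge$-neg-r) if $R\notin\mathcal{U}$: $\Gamma,R{:}B\Rightarrow\Gamma,R{:}A\wedge_{\mathcal{U}}B$; ($\wedge$-pos) if $R\in\mathcal{U}$: $(\Gamma,R{:}A;\ \Gamma,R{:}B)\Rightarrow\Gamma,R{:}A\wedge_{\mathcal{U}}B$; ($\supset$-neg) if $R\notin\mathcal{U}$: $\Gamma,f^{-1}(R){:}A,R{:}B\Rightarrow\Gamma,R{:}A\supset_{f,\mathcal{U}}B$; ($\supset$-pos) if $R\in\mathcal{U}$: $(\Gamma_1,f^{-1}(R){:}A;\ \Gamma_2,R{:}B)\Rightarrow\Gamma_1,\Gamma_2,R{:}A\supset_{f,\mathcal{U}}B$; ($\forall$-neg) if $R\notin\mathcal{U}$ and $t$ is a term: $\Gamma,R{:}A[t/x]\Rightarrow\Gamma,R{:}\forall_{\mathcal{U}}(\lambda x.A)$; ($\forall$-pos) if $R\in\mathcal{U}$ and $x$ has no free occurrence in $\Gamma$: $\Gamma,R{:}A\Rightarrow\Gamma,R{:}\forall_{\mathcal{U}}(\lambda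 x.A)$. A sequent is derivable in MRL if it is the conclusion of a finite derivation tree built from these rules. *)

From Stdlib Require Import List PeanoNat Permutation.
Import ListNotations.

Set Implicit Arguments.

Section MRL.

Context {Role Fn Pred : Type}.

Definition rset := Role -> Prop.
Definition full : rset := fun _ => True.
Definition compl (R : rset) : rset := fun r => ~ R r.
Definition preim (f : Role -> Role) (R : rset) : rset := fun r => R (f r).

Record ultrafilter := {
  uf_mem :> rset -> Prop;
  uf_full : uf_mem full;
  uf_up : forall R1 R2 : rset, uf_mem R1 -> (forall r, R1 r -> R2 r) -> uf_mem R2;
  uf_cap : forall R1 R2 : rset, uf_mem R1 -> uf_mem R2 -> uf_mem (fun r => R1 r /\ R2 r);
  uf_compl : forall R : rset, uf_mem R \/ uf_mem (compl R)
}.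

(* first-order terms; variables are de Bruijn indices *)
Inductive term : Type :=
| Var : nat -> term
| App : Fn -> list term -> term.

Fixpoint tlift (c : nat) (t : term) : term :=
  match t with
  | Var n => Var (if n <? c then n else S n)
  | App f ts => App f (map (tlift c) ts)
  end.

(* substitute u for variable k and lower the variables above k *)
Fixpoint tsubst (k : nat) (u : term) (t : term) : term :=
  match t with
  | Var n => if n <? k then Var n
             else if n =? k then Nat.iter k (tlift 0) u
             else Var (pred n)
  | App f ts => App f (map (tsubst k u) ts)
  end.

Inductive formula : Type :=
| Atom : Pred -> list term -> formula
| Neg : (Role -> Role) -> formula -> formula
| And : ultrafilter -> formula -> formula -> formula
| Imp : (Role -> Role) -> ultrafilter -> formula -> formula -> formula
| All : ultrafilter -> formula -> formula.  (* binds de Bruijn index 0 *)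

Fixpoint flift (c : nat) (A : formula) : formula :=
  match A with
  | Atom p ts => Atom p (map (tlift c) ts)
  | Neg f A => Neg f (flift c A)
  | And U A B => And U (flift c A) (flift c B)
  | Imp f U A B => Imp f U (flift c A) (flift c B)
  | All U A => All U (flift (S c) A)
  end.

Fixpoint fsubst (k : nat) (u : term) (A : formula) : formula :=
  match A with
  | Atom p ts => Atom p (map (tsubst k u) ts)
  | Neg f A => Neg f (fsubst k u A)
  | And U A B => And U (fsubst k u A) (fsubst k u B)
  | Imp f U A B => Imp f U (fsubst k u A) (fsubst k u B)
  | All U A => All U (fsubst (S k) u A)
  end.

(* A[t/x] for the body A of forall_U (lambda x. A) *)
Definition inst (A : formula) (t : term) : formula := fsubst 0 t A.

Definition iformula := (rset * formula)%type.

(* sequents are finite multisets: lists taken up to permutation (rule ex) *)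
Definition sequent := list iformula.

(* shifting all free variables of a sequent: the bound variable of a
   forall becomes index 0, which then has no free occurrence in the
   shifted sequent (eigenvariable condition of forall-pos). *)
Definition slift (G : sequent) : sequent :=
  map (fun i => (fst i, flift 0 (snd i))) G.

Definition disjoint (R1 R2 : rset) : Prop := forall r, ~ (R1 r /\ R2 r).

Inductive derivable : sequent -> Prop :=
| d_ex : forall G G', Permutation G G' -> derivable G -> derivable G'
| d_id : forall G (Rs : list rset) p ts,
    Rs <> [] ->
    ForallOrdPairs disjoint Rs ->
    (forall r, Exists (fun R => R r) Rs) ->
    derivable (G ++ map (fun R => (R, Atom p ts)) Rs)
| d_weaken : forall G R A,
    derivable (G ++ [(R, A); (R, A)]) -> derivable (G ++ [(R, A)])
| d_neg : forall G f R A,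
    derivable (G ++ [(preim f R, A)]) -> derivable (G ++ [(R, Neg f A)])
| d_and_neg_l : forall G (U : ultrafilter) R A B,
    ~ U R -> derivable (G ++ [(R, A)]) -> derivable (G ++ [(R, And U A B)])
| d_and_neg_r : forall G (U : ultrafilter) R A B,
    ~ U R -> derivable (G ++ [(R, B)]) -> derivable (G ++ [(R, And U A B)])
| d_and_pos : forall G (U : ultrafilter) R A B,
    U R -> derivable (G ++ [(R, A)]) -> derivable (G ++ [(R, B)]) ->
    derivable (G ++ [(R, And U A B)])
| d_imp_neg : forall G f (U : ultrafilter) R A B,
    ~ U R -> derivable (G ++ [(preim f R, A); (R, B)]) ->
    derivable (G ++ [(R, Imp f U A B)])
| d_imp_pos : forall G1 G2 f (U : ultrafilter) R A B,
    U R -> derivable (G1 ++ [(preim f R, A)]) -> derivable (G2 ++ [(R, B)]) ->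
    derivable (G1 ++ G2 ++ [(R, Imp f U A B)])
| d_all_neg : forall G (U : ultrafilter) R A (t : term),
    ~ U R -> derivable (G ++ [(R, inst A t)]) -> derivable (G ++ [(R, All U A)])
| d_all_pos : forall G (U : ultrafilter) R A,
    U R -> derivable (slift G ++ [(R, A)]) -> derivable (G ++ [(R, All U A)]).

End MRL.

From Stdlib Require Import List.
Import ListNotations.

(* The full role set lies in every ultrafilter and is its own
   preimage under every endomorphism, so each connective is introduced by its
   positive rule, and an atom by the identity axiom for the one-block partition
   [full]. *)

Lemma derivable_full_atom {Role Fn Pred : Type}
  (G : @sequent Role Fn Pred) (p : Pred) (ts : list (@term Fn)) :
  derivable (G ++ [(full, Atom p ts)]).
Proof.
  apply (d_id G (Rs := [full]) p ts).
  - discriminate.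
  - repeat constructor.
  - intro r. now constructor.
Qed.

Theorem mainTheorem2 (Role Fn Pred : Type) (r0 : Role)
  (G : @sequent Role Fn Pred) (A : @formula Role Fn Pred) :
  derivable (G ++ [(full, A)]).
Proof.
  revert G.
  induction A as [p ts | f A IH | U A IHA B IHB | f U A IHA B IHB | U A IH];
    intro G.
  - apply derivable_full_atom.
  - apply d_neg, IH.
  - apply d_and_pos; [apply uf_full | apply IHA | apply IHB].
  - exact (d_imp_pos G [] f U full A B (uf_full U) (IHA G) (IHB [])).
  - apply d_all_pos; [apply uf_full | apply IH].
Qed.
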